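(* Let $m,n\ge 1$ and let $x_1,\dots,x_m\in\{0,1\}^n$ be arbitrary input vectors. Run the Triangular Basis Algorithm (described in the context) on these inputs, and for each $i\in\{1,\dots,n\}$ define \[\beta_i = 0^{i-1}\,\Vert\,\overline{av_i}\,\Vert\, b_i[(i+1)..n]\in\{0,1\}^n,\] where $av_i$ and $b_i[(i+1)..n]$ are the values at the end of the algorithm and $\overline{av_i}=1\oplus av_i$. Then the $\mathbb{F}_2$-linear span of the original input vectors $x_1,\dots,x_m$ equals the $\mathbb{F}_2$-linear span of $\beta_1,\dots,\beta_n$.
   Context: All arithmetic is over $\mathbb{F}_2$ ($+$ is XOR, $\wedge$ is AND). For a vector $v\in\{0,1\}^n$, $v[i]$ is its $i$-th bit and $v[a..b]$ the substring of bits $a$ through $b$ (empty if $a>b$); $\Vert$ is concatenation. Triangular Basis Algorithm. Input: $x_1,\dots,x_m\in\{0,1\}^n$ (modified in place). Auxiliary variables: bits $\mathrm{used}_j$ ($1\le j\le m$) initialized to $0$; bits $av_i$ ($1\le i\le n$) initialized to $1$; strings $b_i[(i+1)..n]$ ($1\le i\le n$) initialized to all zeros. The algorithm executes, for $i=1,\dots,n$ (outer loop) and, inside it, for $j=1,\dots,m$ (inner loop), the following four steps in order (iteration $(i,j)$): (1) $\mathrm{used}_j \leftarrow \mathrm{used}_j + (x_j[i]\wedge av_i)$; (2) $av_i\leftarrow av_i + (x_j[i]\wedge \mathrm{used}_j)$ (using the value of $\mathrm{used}_j$ just updated); (3) if $\mathrm{used}_j=1$: $b_i[(i+1)..n]\leftarrow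 b_i[(i+1)..n]+x_j[(i+1)..n]$; (4) if $x_j[i]=1$: $x_j[(i+1)..n]\leftarrow x_j[(i+1)..n]+b_i[(i+1)..n]$. *)

(* Vectors in {0,1}^n are functions 'I_n -> bool (bit i is
   index i, 0-based: paper's bit i+1); spans are taken as row spaces of
   matrices over the field 'F_2. *)
From HB Require Import structures.
From mathcomp Require Import all_boot all_order all_algebra.
Set Implicit Arguments. Unset Strict Implicit. Unset Printing Implicit Defensive.

Section TBA.
Variables m n : nat.

Record tba_state := TBAState {
  st_x    : 'I_m -> 'I_n -> bool;
  st_used : 'I_m -> bool;
  st_av   : 'I_n -> bool;
  st_b    : 'I_n -> 'I_n -> bool   (* b_i[k], only meaningful for k > i *)
}.

Definition tba_init (x : 'I_m -> 'I_n -> bool) : tba_state :=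
  TBAState x (fun _ => false) (fun _ => true) (fun _ _ => false).

Definition tba_step (i : 'I_n) (j : 'I_m) (s : tba_state) : tba_state :=
  let xji := st_x s j i in
  let u := addb (st_used s j) (xji && st_av s i) in
  let used' := fun j' => if j' == j then u else st_used s j' in
  let a := addb (st_av s i) (xji && u) in
  let av' := fun i' => if i' == i then a else st_av s i' in
  let bi := fun k : 'I_n =>
      if u && (i < k)%N then addb (st_b s i k) (st_x s j k) else st_b s i k in
  let b' := fun i' k => if i' == i then bi k else st_b s i' k in
  let xj := fun k : 'I_n =>
      if xji && (i < k)%N then addb (st_x s j k) (bi k) else st_x s j k in
  let x' := fun j' k => if j' == j then xj k else st_x s j' k in
  TBAState x' used' av' b'.

Definition tba_run (x : 'I_m -> 'I_n -> bool) : tba_state :=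
  foldl (fun s i => foldl (fun s' j => tba_step i j s') s (enum 'I_m))
        (tba_init x) (enum 'I_n).

Definition tba_beta (x : 'I_m -> 'I_n -> bool) (i k : 'I_n) : bool :=
  let s := tba_run x in
  if (k < i)%N then false
  else if k == i then ~~ st_av s i
  else st_b s i k.

Definition input_mx (x : 'I_m -> 'I_n -> bool) : 'M['F_2]_(m, n) :=
  \matrix_(j < m, k < n) ((x j k)%:R)%R.

Definition beta_mx (x : 'I_m -> 'I_n -> bool) : 'M['F_2]_(n, n) :=
  \matrix_(i < n, k < n) ((tba_beta x i k)%:R)%R.

End TBA.

From HB Require Import structures.
From mathcomp Require Import all_boot all_order all_algebra.

Set Implicit Arguments. Unset Strict Implicit. Unset Printing Implicit Defensive.
Import GRing.Theory.

(* We follow the run of the algorithm with an invariant indexed by the current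
   outer index i and the list D of rows already treated in iteration i; row j
   is then "reduced up to" its frontier i + [j \in D].  The invariant says:
   (a) a used row has no bits at or beyond its frontier;
   (b) each input row x_j differs from the high part (bits beyond the frontier)
       of the current x_j by an element of span(beta);
   (c) span(beta) is contained in span(x);
   (d) for p >= i, an available pivot p still has an empty b_p.
   A single step (i,j) preserves the invariant; there are three cases: x_j[i]=0
   (nothing relevant changes), x_j[i]=1 with av_i=1 (x_j becomes pivot row i)
   and x_j[i]=1 with av_i=0 (x_j is reduced by the existing pivot row beta_i).
   Folding over both loops gives the invariant for i = n, where all frontiers
   are beyond the last bit, so (b) says x_j is in span(beta); with (c) this is
   the theorem. *)

Section TriangularBasis.
Local Open Scope ring_scope.
Variables m n : nat.
Variable x0 : 'I_m -> 'I_n -> bool.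

Lemma natr_addb (a b : bool) : ((a (+) b)%:R : 'F_2) = a%:R + b%:R.
Proof. by case: a; case: b => //=; rewrite ?add0r ?addr0 //; apply: val_inj. Qed.

Definition rowv (f : 'I_n -> bool) : 'rV['F_2]_n := \row_k ((f k)%:R).

Lemma rowv_ext (f g : 'I_n -> bool) : f =1 g -> rowv f = rowv g.
Proof. by move=> fg; apply/rowP => k; rewrite !mxE fg. Qed.

Lemma rowv_addb (f g h : 'I_n -> bool) :
  (forall k, f k = g k (+) h k) -> rowv f = rowv g + rowv h.
Proof. by move=> fgh; apply/rowP => k; rewrite !mxE fgh natr_addb. Qed.

Lemma rowv0 (f : 'I_n -> bool) : f =1 (fun _ => false) -> rowv f = 0.
Proof. by move=> f0; apply/rowP => k; rewrite !mxE f0. Qed.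

Definition high (c : nat) (f : 'I_n -> bool) (k : 'I_n) : bool :=
  (c <= k)%N && f k.

Definition betaS (s : tba_state m n) (p k : 'I_n) : bool :=
  if (k < p)%N then false else if k == p then ~~ st_av s p else st_b s p k.

Definition betaM (s : tba_state m n) : 'M['F_2]_(n, n) :=
  \matrix_(p, k) ((betaS s p k)%:R).

Lemma row_betaM s p : row p (betaM s) = rowv (betaS s p).
Proof. by apply/rowP => k; rewrite !mxE. Qed.

Lemma row_input j : row j (input_mx x0) = rowv (x0 j).
Proof. by apply/rowP => k; rewrite !mxE. Qed.

Lemma sub_rows_or0 (A B : 'M['F_2]_(n, n)) :
  (forall p, row p A = row p B \/ row p A = 0) -> (A <= B)%MS.
Proof.
move=> AB; apply/row_subP => p.
by case: (AB p) => ->; [exact: row_sub | exact: sub0mx].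
Qed.

(* Row j has been treated up to position i + [j \in D]. *)
Definition frontier (i : nat) (D : seq 'I_m) (j : 'I_m) : nat := (i + (j \in D))%N.

Record tba_inv (i : nat) (D : seq 'I_m) (s : tba_state m n) : Prop := TbaInv {
  inv_used_low : forall j (k : 'I_n),
    st_used s j -> (frontier i D j <= k)%N -> st_x s j k = false;
  inv_residue : forall j,
    (rowv (fun k => x0 j k (+) high (frontier i D j) (st_x s j) k) <= betaM s)%MS;
  inv_beta_sub : (betaM s <= input_mx x0)%MS;
  inv_avail_empty : forall p k : 'I_n, (i <= p)%N -> st_av s p -> st_b s p k = false
}.

Section Step.
Variables (i : 'I_n) (D : seq 'I_m) (j : 'I_m) (s : tba_state m n).
Hypothesis inv : tba_inv i D s.
Hypothesis jD : j \notin D.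

Let s' := tba_step i j s.

Lemma frontier_cur : frontier i D j = i.
Proof. by rewrite /frontier (negbTE jD) addn0. Qed.

Lemma frontier_rcons j' : frontier i (rcons D j) j' = (frontier i D j' + (j' == j))%N.
Proof.
rewrite /frontier mem_rcons in_cons; case: eqP => [->|_] /=; last by rewrite addn0.
by rewrite (negbTE jD) addn0.
Qed.

Lemma frontier_rcons_other j' : j' != j -> frontier i (rcons D j) j' = frontier i D j'.
Proof. by move=> jj; rewrite frontier_rcons (negbTE jj) addn0. Qed.

Lemma residue_cur :
  (rowv (fun k => x0 j k (+) high i (st_x s j) k) <= betaM s)%MS.
Proof. by rewrite -frontier_cur; exact: inv_residue inv j. Qed.

(* Case x_j[i] = 0: only b_i may be touched, and only at positions where a used
   x_j is already 0, so the state is unchanged where the invariant looks. *)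
Lemma step_no_bit : st_x s j i = false -> tba_inv i (rcons D j) s'.
Proof.
move=> xji.
have Eu j' : st_used s' j' = st_used s j'.
  by rewrite /s' /tba_step /=; case: eqP => // ->; rewrite xji addbF.
have Ea p : st_av s' p = st_av s p.
  by rewrite /s' /tba_step /=; case: eqP => // ->; rewrite xji /= addbF.
have Eb p k : st_b s' p k = st_b s p k.
  rewrite /s' /tba_step /=; case: eqP => // ->; rewrite xji andFb addbF.
  case: ifP => // /andP [u ik].
  by rewrite (inv_used_low inv) ?addbF // frontier_cur ltnW.
have Ex j' k : st_x s' j' k = st_x s j' k.
  by rewrite /s' /tba_step /=; case: eqP => // ->; rewrite xji.
have EB : betaM s' = betaM s by apply/matrixP => p k; rewrite !mxE /betaS Ea Eb.
(* moving the frontier of row j past bit i changes nothing, as that bit is 0 *)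
have Ehigh j' : high (frontier i (rcons D j) j') (st_x s' j') =1
                high (frontier i D j') (st_x s j').
  move=> k; rewrite /high Ex frontier_rcons; case: (j' =P j) => [->|_]; last by rewrite addn0.
  rewrite frontier_cur addn1; case: (ltngtP i k) => [ik|ik|ik] //=.
  by rewrite -(ord_inj ik) xji.
split.
- move=> j' k; rewrite Eu Ex frontier_rcons => u h; apply: (inv_used_low inv) => //.
  exact: leq_trans (leq_addr _ _) h.
- move=> j'; rewrite EB; erewrite rowv_ext; first exact: (inv_residue inv j').
  by move=> k /=; rewrite Ehigh.
- by rewrite EB; exact: inv_beta_sub inv.
- by move=> p k ip; rewrite Ea Eb; apply: (inv_avail_empty inv).
Qed.

Hypothesis xji : st_x s j i = true.

(* Row j cannot have been used before, since a used row has no bit i. *)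
Lemma unused_cur : st_used s j = false.
Proof.
by apply/negP => u; move: xji; rewrite (inv_used_low inv) // frontier_cur.
Qed.

(* Case x_j[i] = 1, av_i = 1: row j becomes the pivot of column i; b_i takes
   the bits of x_j beyond i and x_j keeps only its bits up to i. *)
Lemma step_pivot : st_av s i = true -> tba_inv i (rcons D j) s'.
Proof.
move=> avi; have uf := unused_cur.
have b0 k : st_b s i k = false by apply: (inv_avail_empty inv).
have Eu j' : st_used s' j' = (j' == j) || st_used s j'.
  by rewrite /s' /tba_step /=; case: (j' =P j) => [E|_] //; rewrite ?E; rewrite xji avi uf.
have Ea p : st_av s' p = (p != i) && st_av s p.
  by rewrite /s' /tba_step /=; case: (p =P i) => [E|_] //; rewrite ?E; rewrite xji avi uf.
have Eb p k : st_b s' p k = if p == i then high i.+1 (st_x s j) k else st_b s p k.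
  rewrite /s' /tba_step /=; case: (p =P i) => [E|_] //; rewrite ?E.
  by rewrite xji avi uf b0 /high /=; case: ifP.
have Ex j' k : st_x s' j' k = if j' == j then ~~ (i < k)%N && st_x s j k else st_x s j' k.
  rewrite /s' /tba_step /=; case: (j' =P j) => [E|_] //; rewrite ?E.
  by rewrite xji avi uf b0 /high /=; case: (i < k)%N => /=; rewrite ?addbb.
(* the new pivot row beta_i is the high part of x_j from position i on;
   it replaces the zero row i, so span(beta) only grows *)
have Bi : row i (betaM s') = rowv (high i (st_x s j)).
  rewrite row_betaM; apply: rowv_ext => k; rewrite /betaS Ea Eb eqxx /= /high.
  case: (ltngtP k i) => ki //=.
  - by case: eqP => // E; move: ki; rewrite E ltnn.
  - by rewrite (ord_inj ki) eqxx xji.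
have Bother p : p != i -> row p (betaM s') = row p (betaM s).
  by move=> pi; rewrite !row_betaM; apply: rowv_ext => k; rewrite /betaS Ea Eb (negbTE pi).
have Bi0 : row i (betaM s) = 0.
  rewrite row_betaM; apply: rowv0 => k; rewrite /betaS avi b0.
  by case: ifP => //; case: ifP.
have Mono : (betaM s <= betaM s')%MS.
  apply: sub_rows_or0 => p; case: (p =P i) => [->|/eqP pi]; [right; exact: Bi0 | left].
  by rewrite Bother.
have Hin : (rowv (high i (st_x s j)) <= input_mx x0)%MS.
  rewrite (@rowv_addb _ (x0 j) (fun k => x0 j k (+) high i (st_x s j) k)).
    apply: addmx_sub; first by rewrite -row_input row_sub.
    exact: submx_trans residue_cur (inv_beta_sub inv).
  by move=> k; rewrite addKb.
split.
- move=> j' k; rewrite Eu Ex frontier_rcons; case: (j' =P j) => [->|_] /=.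
    by rewrite frontier_cur addn1 => _ ->.
  by rewrite addn0; apply: (inv_used_low inv).
- move=> j'; case: (j' =P j) => [->|/eqP jj].
    rewrite (@rowv_addb _ (fun k => x0 j k (+) high i (st_x s j) k) (high i (st_x s j))).
      apply: addmx_sub; first exact: submx_trans residue_cur Mono.
      by rewrite -Bi row_sub.
    move=> k; rewrite /high frontier_rcons frontier_cur eqxx addn1 Ex eqxx.
    by case: (i < k)%N; rewrite /= ?andbF ?addbF // -addbA addbb addbF.
  apply: submx_trans Mono; erewrite rowv_ext; first exact: (inv_residue inv j').
  by move=> k /=; rewrite /high frontier_rcons_other // (negbTE jj).
- apply/row_subP => p; case: (p =P i) => [->|/eqP pi]; first by rewrite Bi.
  by rewrite Bother //; exact: submx_trans (row_sub p _) (inv_beta_sub inv).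
- move=> p k ip; rewrite Ea Eb => /andP [pi av]; rewrite (negbTE pi).
  exact: (inv_avail_empty inv).
Qed.

(* Case x_j[i] = 1, av_i = 0: beta_i is added to x_j beyond position i, which
   clears bit i in the high part, so the residue changes by beta_i. *)
Lemma step_reduce : st_av s i = false -> tba_inv i (rcons D j) s'.
Proof.
move=> avi; have uf := unused_cur.
have Eu j' : st_used s' j' = st_used s j'.
  by rewrite /s' /tba_step /=; case: (j' =P j) => [E|_] //; rewrite ?E; rewrite xji avi uf.
have Ea p : st_av s' p = st_av s p.
  by rewrite /s' /tba_step /=; case: (p =P i) => [E|_] //; rewrite ?E; rewrite xji avi uf.
have Eb p k : st_b s' p k = st_b s p k.
  by rewrite /s' /tba_step /=; case: (p =P i) => [E|_] //; rewrite ?E; rewrite xji avi uf.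
have Ex j' k : st_x s' j' k =
    if j' == j then (if (i < k)%N then st_x s j k (+) st_b s i k else st_x s j k)
    else st_x s j' k.
  by rewrite /s' /tba_step /=; case: (j' =P j) => [E|_] //; rewrite ?E; rewrite xji avi uf.
have EB : betaM s' = betaM s by apply/matrixP => p k; rewrite !mxE /betaS Ea Eb.
split.
- move=> j' k; rewrite Eu Ex frontier_rcons; case: (j' =P j) => [->|_] /=.
    by rewrite uf.
  by rewrite addn0; apply: (inv_used_low inv).
- move=> j'; rewrite EB; case: (j' =P j) => [->|/eqP jj].
    rewrite (@rowv_addb _ (fun k => x0 j k (+) high i (st_x s j) k) (betaS s i)).
      by apply: addmx_sub; [exact: residue_cur | rewrite -row_betaM row_sub].
    move=> k; rewrite /high frontier_rcons frontier_cur eqxx addn1 Ex eqxx /betaS avi.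
    case: (ltngtP k i) => ki //=.
    + by rewrite !addbF.
    + case: eqP => [E|_]; first by move: ki; rewrite E ltnn.
      by rewrite -addbA.
    + by rewrite (ord_inj ki) eqxx xji -addbA addbb.
  erewrite rowv_ext; first exact: (inv_residue inv j').
  by move=> k /=; rewrite /high frontier_rcons_other // (negbTE jj).
- by rewrite EB; exact: inv_beta_sub inv.
- by move=> p k ip; rewrite Ea Eb; apply: (inv_avail_empty inv).
Qed.

End Step.

Lemma step_inv (i : 'I_n) D j s :
  tba_inv i D s -> j \notin D -> tba_inv i (rcons D j) (tba_step i j s).
Proof.
move=> inv jD; case xji: (st_x s j i); last exact: step_no_bit.
by case avi: (st_av s i); [exact: step_pivot | exact: step_reduce].
Qed.

Lemma inner_inv (i : 'I_n) r D s : uniq (D ++ r) -> tba_inv i D s ->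
  tba_inv i (D ++ r) (foldl (fun s' j => tba_step i j s') s r).
Proof.
elim: r D s => [|j r IH] D s; first by rewrite cats0.
rewrite -cat_rcons => U inv /=; apply: IH => //.
apply: step_inv => //; move: U; rewrite cat_uniq => /and3P [+ _ _].
by rewrite rcons_uniq => /andP [].
Qed.

Lemma column_inv (i : 'I_n) s : tba_inv i [::] s ->
  tba_inv i.+1 [::] (foldl (fun s' j => tba_step i j s') s (enum 'I_m)).
Proof.
move=> inv; have [I1 I2 I3 I4] := @inner_inv i (enum 'I_m) [::] s (enum_uniq _) inv.
have E j : frontier i ([::] ++ enum 'I_m) j = frontier i.+1 [::] j.
  by rewrite /frontier mem_enum addn1 addn0.
split => //.
- by move=> j k; rewrite -E; apply: I1.
- by move=> j; rewrite -E; apply: I2.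
- by move=> p k ip; apply: I4; apply: ltnW.
Qed.

Lemma outer_inv r s (i0 : nat) : map val r = iota i0 (size r) -> tba_inv i0 [::] s ->
  tba_inv (i0 + size r) [::]
    (foldl (fun s i => foldl (fun s' j => tba_step i j s') s (enum 'I_m)) s r).
Proof.
elim: r s i0 => [|i r IH] s i0 /=; first by rewrite addn0.
case=> Ei Er inv; rewrite addnS -addSn; apply: IH => //.
by rewrite -Ei; apply: column_inv; rewrite Ei.
Qed.

Lemma init_inv : tba_inv 0 [::] (tba_init x0).
Proof.
split => //.
- move=> j; rewrite rowv0 ?sub0mx // => k.
  by rewrite /high /frontier /= addbb.
- have -> : betaM (tba_init x0) = 0.
    by apply/matrixP => p k; rewrite !mxE /betaS /=; case: ifP => //; case: ifP.
  exact: sub0mx.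
Qed.

Lemma final_inv : tba_inv n [::] (tba_run x0).
Proof.
have := @outer_inv (enum 'I_n) _ 0 _ init_inv.
by rewrite size_enum_ord add0n val_enum_ord; apply.
Qed.

End TriangularBasis.

Theorem mainTheorem1 (m n : nat) (hm : (0 < m)%N) (hn : (0 < n)%N)
    (x : 'I_m -> 'I_n -> bool) :
  (input_mx x == beta_mx x)%MS.
Proof.
have [_ residue beta_sub _] := final_inv x.
rewrite -[beta_mx x]/(betaM (tba_run x)).
apply/andP; split; last exact: beta_sub.
apply/row_subP => j; rewrite row_input.
erewrite rowv_ext; first exact: (residue j).
(* at the end every frontier is n, so the high parts are empty *)
by move=> k /=; rewrite /high /frontier /= addn0 leqNgt ltn_ord andFb addbF.
Qed.
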